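(* Let $x^*\in\mathbb{O}^n$. Then $x^*$ is an equilibrium of the PID opinion dynamics (i.e., $P_i(x^* )=\{x_i^*\}$ for every $i\in\mathcal V$) if and only if at least one of the following holds: (1) $x^*$ is a consensus state, i.e., $x_1^*=x_2^*=\cdots=x_n^*$; (2) for every $z\in\mathbb{O}$ with $z<\theta$, the set $\mathcal V_{\le z}(x^* )$ is a strictly cohesive set in $\mathcal G(W)$, and for every $z\in\mathbb{O}$ with $z>\theta$, the set $\mathcal V_{\ge z}(x^* )$ is a strictly cohesive set in $\mathcal G(W)$.
   Context: Let $n\ge 1$, $\mathcal V=\{1,\dots,n\}$, and let $W=(w_{ij})$ be an $n\times n$ row-stochastic matrix (nonnegative entries, each row summing to $1$); $\mathcal G(W)$ is the weighted directed graph on $\mathcal V$ with an edge $i\to j$ iff $w_{ij}>0$. The opinion set is a finite set of consecutive integers $\mathbb O=\{k,k+1,\dots,k+s\}$, and $\theta\in\mathbb O$ is a fixed ''truth''. For $x\in\mathbb O^n$, $i\in\mathcal V$, $z\in\mathbb O$, define the social cost $C^i_{\mathrm{social}}(z;x)=\sum_{j=1}^n w_{ij}|z-x_j|$ and the cognitive cost $C^i_{\mathrm{cog}}(z)=|z-\theta|$. The Pareto-improvement set is $P_i(x)=\{z\in\mathbb O: C^i_{\mathrm{social}}(z;x)\le C^i_{\mathrm{social}}(x_i;x),\ |z-\theta|\le |x_i-\theta|\}$. In the PID opinion dynamics, starting from $x(0)\in\mathbb O^n$, at each time $t+1$ a node $i$ is chosen uniformly at random from $\mathcal V$ and sets $x_i(t+1)$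 to an element chosen at random from $P_i(x(t))$; all other nodes keep their opinions. An equilibrium is a state $x^*$ with $P_i(x^* )=\{x^*_i\}$ for all $i$. For $x\in\mathbb O^n$ and $z\in\mathbb Z$, $\mathcal V_{\le z}(x)=\{j\in\mathcal V: x_j\le z\}$ and $\mathcal V_{\ge z}(x)=\{j\in\mathcal V: x_j\ge z\}$. A set $\mathcal M\subseteq\mathcal V$ is strictly cohesive if $\sum_{j\in\mathcal M}w_{ij}>\tfrac12$ for every $i\in\mathcal M$; by convention the empty set is strictly cohesive. *)

From HB Require Import structures.
From mathcomp Require Import all_boot all_order all_algebra.
Set Implicit Arguments. Unset Strict Implicit. Unset Printing Implicit Defensive.
Import Order.TTheory GRing.Theory Num.Theory.
Local Open Scope ring_scope.

(* Nodes are 'I_n; opinions are integers; the opinion set is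
   O = {k, k+1, ..., k+s} with k : int, s : nat. *)

Definition in_opinions (k : int) (s : nat) (z : int) : bool :=
  (k <= z) && (z <= k + s%:Z).

Definition row_stochastic (R : realFieldType) (n : nat) (W : 'M[R]_n) : Prop :=
  (forall i j, 0 <= W i j) /\ (forall i, \sum_(j < n) W i j = 1).

Definition social_cost (R : realFieldType) (n : nat) (W : 'M[R]_n)
  (x : 'I_n -> int) (i : 'I_n) (z : int) : R :=
  \sum_(j < n) W i j * (`|z - x j|%:~R).

Definition pareto_improvement (R : realFieldType) (n : nat) (W : 'M[R]_n)
  (k : int) (s : nat) (theta : int) (x : 'I_n -> int) (i : 'I_n) (z : int) : Prop :=
  in_opinions k s z /\
  (social_cost W x i z <= social_cost W x i (x i)) /\
  (`|z - theta| <= `|x i - theta|).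

Definition is_equilibrium (R : realFieldType) (n : nat) (W : 'M[R]_n)
  (k : int) (s : nat) (theta : int) (x : 'I_n -> int) : Prop :=
  forall i : 'I_n, forall z : int, pareto_improvement W k s theta x i z <-> z = x i.

Definition V_le (n : nat) (x : 'I_n -> int) (z : int) : {set 'I_n} :=
  [set j | x j <= z].
Definition V_ge (n : nat) (x : 'I_n -> int) (z : int) : {set 'I_n} :=
  [set j | z <= x j].

(* Strictly cohesive: sum_{j in M} w_ij > 1/2 for all i in M (vacuous for M empty). *)
Definition strictly_cohesive (R : realFieldType) (n : nat) (W : 'M[R]_n)
  (M : {set 'I_n}) : Prop :=
  forall i, i \in M -> 2^-1 < \sum_(j in M) W i j.

Definition consensus (n : nat) (x : 'I_n -> int) : Prop :=
  forall i j : 'I_n, x i = x j.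

From HB Require Import structures.
From mathcomp Require Import all_boot all_order all_algebra.
From mathcomp Require Import zify lra.
Import Order.TTheory GRing.Theory Num.Theory.
Local Open Scope ring_scope.

(* Moving node i's opinion from a to a + 1 changes its social cost by exactly
   2 w_i(V_<=a) - 1, and by convexity of |.| a move from a to any z > a raises
   it by at least (z - a) times that amount.  A node below theta can improve
   its cognitive cost only by moving up, so it is stuck iff
   w_i(V_<=x_i) > 1/2; reflecting the opinion axis gives the mirror condition
   above theta, and a node at theta is always stuck.  Since V_<=z grows with z,
   these node-wise conditions are exactly strict cohesiveness of the level
   sets; under consensus every level set is empty or full. *)

Lemma ler_sum_subset (R : numDomainType) (T : finType) (A B : {set T})
    (F : T -> R) :
  (forall j, 0 <= F j) -> A \subset B -> \sum_(j in A) F j <= \sum_(j in B) F j.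
Proof.
move=> F_ge0 sAB; rewrite [leRHS](bigID [in A]) /=.
have -> : \sum_(j in B | j \in A) F j = \sum_(j in A) F j.
  by apply: eq_bigl => j; rewrite andb_idl //; apply: (subsetP sAB).
by rewrite lerDl sumr_ge0.
Qed.

Lemma distD1 (a y : int) : `|a + 1 - y| - `|a - y| = if y <= a then 1 else -1.
Proof. by case: ifP => ?; lia. Qed.

Lemma dist_increment_ge (a z y : int) :
  a < z -> (z - a) * (if y <= a then 1 else -1) <= `|z - y| - `|a - y|.
Proof. by move=> ?; case: ifP => ?; lia. Qed.

Section Equilibria.
Variables (R : realFieldType) (n : nat) (W : 'M[R]_n).
Hypotheses (W_ge0 : forall i j, 0 <= W i j)
           (W_sum1 : forall i, \sum_(j < n) W i j = 1).
Implicit Types (x : 'I_n -> int) (i : 'I_n) (a k theta z : int) (s : nat).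

Lemma social_costB x i z a :
  social_cost W x i z - social_cost W x i a =
  \sum_(j < n) W i j * (`|z - x j| - `|a - x j|)%:~R.
Proof. by rewrite -sumrB; apply: eq_bigr => j _; rewrite -mulrBr rmorphB. Qed.

Lemma social_costN x i z :
  social_cost W x i z = social_cost W (fun j => - x j) i (- z).
Proof. by apply: eq_bigr => j _; rewrite -opprD normrN. Qed.

Lemma signed_mass_V_le x i a :
  \sum_(j < n) W i j * (if x j <= a then 1 else -1)%:~R =
  2 * \sum_(j in V_le x a) W i j - 1.
Proof.
rewrite -[X in _ - X](W_sum1 i) [in RHS]big_mkcond mulr_sumr -sumrB /=.
by apply: eq_bigr => j _; rewrite inE; case: ifP => _; rewrite ?intrN; lra.
Qed.

Lemma social_cost_succ x i a :
  social_cost W x i (a + 1) - social_cost W x i a =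
  2 * \sum_(j in V_le x a) W i j - 1.
Proof.
by rewrite social_costB -signed_mass_V_le; under eq_bigr do rewrite distD1.
Qed.

Lemma social_cost_increment_ge x i a z : a < z ->
  (z - a)%:~R * (2 * \sum_(j in V_le x a) W i j - 1) <=
  social_cost W x i z - social_cost W x i a.
Proof.
move=> lt_az; rewrite social_costB -signed_mass_V_le mulr_sumr.
apply: ler_sum => j _; rewrite mulrCA -intrM ler_wpM2l // ler_int.
exact: dist_increment_ge.
Qed.

Lemma in_opinionsN k s z :
  in_opinions (- (k + s%:Z)) s (- z) = in_opinions k s z.
Proof. by rewrite /in_opinions; apply/andP/andP; lia. Qed.

Lemma V_geN x a : V_ge x a = V_le (fun j => - x j) (- a).
Proof. by apply/setP => j; rewrite !inE lerN2. Qed.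

Lemma pareto_improvementN k s theta x i z :
  pareto_improvement W (- (k + s%:Z)) s (- theta) (fun j => - x j) i (- z) <->
  pareto_improvement W k s theta x i z.
Proof.
by rewrite /pareto_improvement in_opinionsN -!social_costN -!opprD !normrN.
Qed.

Definition stable k s theta x i : Prop :=
  forall z, pareto_improvement W k s theta x i z -> z = x i.

Lemma stableN k s theta x i :
  stable (- (k + s%:Z)) s (- theta) (fun j => - x j) i <-> stable k s theta x i.
Proof.
split=> st z.
- by rewrite -pareto_improvementN => /st /oppr_inj.
- by rewrite -[z]opprK pareto_improvementN => /st ->.
Qed.

Lemma stable_below k s theta x i :
  in_opinions k s theta -> in_opinions k s (x i) -> x i < theta ->
  stable k s theta x i <-> 2^-1 < \sum_(j in V_le x (x i)) W i j.
Proof.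
rewrite /in_opinions => Otheta Oxi lt_xi.
split=> [st | coh z [_ [le_cost le_dist]]].
- have : 0 < social_cost W x i (x i + 1) - social_cost W x i (x i).
    rewrite subr_gt0 ltNge; apply/negP => le_cost.
    suff : x i + 1 = x i by lia.
    by apply: st; split; [|split=> //]; [apply/andP|]; lia.
  by rewrite social_cost_succ; lra.
- have [-> // | lt_xz] : z = x i \/ x i < z by lia.
  have step_gt0 : 0 < (z - x i)%:~R :> R by rewrite ltr0z subr_gt0.
  have mass_gt0 : 0 < 2 * \sum_(j in V_le x (x i)) W i j - 1 by lra.
  have := lt_le_trans (mulr_gt0 step_gt0 mass_gt0)
                     (social_cost_increment_ge x i (x i) z lt_xz).
  by rewrite subr_gt0 ltNge le_cost.
Qed.

Lemma stable_at_truth k s theta x i : x i = theta -> stable k s theta x i.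
Proof. by move=> xi_theta z [_ [_]]; rewrite xi_theta subrr normr0; lia. Qed.

Lemma stable_above k s theta x i :
  in_opinions k s theta -> in_opinions k s (x i) -> theta < x i ->
  stable k s theta x i <-> 2^-1 < \sum_(j in V_ge x (x i)) W i j.
Proof.
move=> Otheta Oxi lt_theta_xi.
by rewrite -stableN stable_below ?in_opinionsN ?ltrN2 // V_geN.
Qed.

Lemma stableE k s theta x i :
  in_opinions k s theta -> in_opinions k s (x i) ->
  stable k s theta x i <->
  (x i < theta -> 2^-1 < \sum_(j in V_le x (x i)) W i j) /\
  (theta < x i -> 2^-1 < \sum_(j in V_ge x (x i)) W i j).
Proof.
move=> Otheta Oxi; case: (ltgtP (x i) theta) => [lt_xi | gt_xi | eq_xi].
- rewrite stable_below //; split=> [coh | [-> //]].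
  by split=> // /(lt_trans lt_xi); rewrite ltxx.
- rewrite stable_above //; split=> [coh | [_ -> //]].
  by split=> // /(lt_trans gt_xi); rewrite ltxx.
- by split=> // _; apply: stable_at_truth.
Qed.

Definition lower_levels_cohesive k s theta x : Prop :=
  forall z, in_opinions k s z -> z < theta -> strictly_cohesive W (V_le x z).

Definition upper_levels_cohesive k s theta x : Prop :=
  forall z, in_opinions k s z -> theta < z -> strictly_cohesive W (V_ge x z).

Lemma lower_levels_cohesiveE k s theta x :
  (forall i, in_opinions k s (x i)) ->
  lower_levels_cohesive k s theta x <->
  forall i, x i < theta -> 2^-1 < \sum_(j in V_le x (x i)) W i j.
Proof.
move=> Ox; split=> [coh i lt_xi | coh z _ lt_z i].
  by apply: (coh _ (Ox i) lt_xi i); rewrite inE.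
rewrite inE => le_xz; apply: lt_le_trans (coh i (le_lt_trans le_xz lt_z)) _.
apply: ler_sum_subset => //; apply/subsetP => j; rewrite !inE => le_xj.
exact: le_trans le_xj le_xz.
Qed.

Lemma upper_levels_cohesiveE k s theta x :
  (forall i, in_opinions k s (x i)) ->
  upper_levels_cohesive k s theta x <->
  forall i, theta < x i -> 2^-1 < \sum_(j in V_ge x (x i)) W i j.
Proof.
move=> Ox; split=> [coh i lt_xi | coh z _ lt_z i].
  by apply: (coh _ (Ox i) lt_xi i); rewrite inE.
rewrite inE => le_zx; apply: lt_le_trans (coh i (lt_le_trans lt_z le_zx)) _.
apply: ler_sum_subset => //; apply/subsetP => j; rewrite !inE.
exact: le_trans le_zx.
Qed.

Lemma strictly_cohesive_full (M : {set 'I_n}) :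
  (forall i, i \in M -> M = [set: 'I_n]) -> strictly_cohesive W M.
Proof.
move=> full i /full ->; under eq_bigl do rewrite inE.
by rewrite W_sum1 invf_lt1 ?ltr1n.
Qed.

Lemma consensus_levels_cohesive k s theta x : consensus x ->
  lower_levels_cohesive k s theta x /\ upper_levels_cohesive k s theta x.
Proof.
move=> cons; split=> z _ _; apply: strictly_cohesive_full => i; rewrite inE => hi;
  by apply/setP => j; rewrite !inE (cons j i).
Qed.

Lemma equilibriumE k s theta x :
  (forall i, in_opinions k s (x i)) ->
  is_equilibrium W k s theta x <-> forall i, stable k s theta x i.
Proof.
move=> Ox; split=> [eq i z /eq // | st i z].
by split=> [/st // | ->]; split; [exact: Ox | split].
Qed.

Lemma equilibrium_iff_levels_cohesive k s theta x :
  in_opinions k s theta -> (forall i, in_opinions k s (x i)) ->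
  is_equilibrium W k s theta x <->
  lower_levels_cohesive k s theta x /\ upper_levels_cohesive k s theta x.
Proof.
move=> Otheta Ox.
rewrite equilibriumE // lower_levels_cohesiveE // upper_levels_cohesiveE //.
split=> [st | [lower upper] i].
  by split=> i; move: (st i); rewrite stableE // => -[].
by rewrite stableE //; split; [apply: lower | apply: upper].
Qed.

End Equilibria.

Theorem theorem1 (R : realFieldType) (n : nat) (W : 'M[R]_n)
  (k : int) (s : nat) (theta : int) (xs : 'I_n -> int) :
  (1 <= n)%N ->
  row_stochastic W ->
  in_opinions k s theta ->
  (forall i, in_opinions k s (xs i)) ->
  (is_equilibrium W k s theta xs <->
   (consensus xs \/
    ((forall z : int, in_opinions k s z -> z < theta ->
        strictly_cohesive W (V_le xs z)) /\
     (forall z : int, in_opinions k s z -> theta < z ->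
        strictly_cohesive W (V_ge xs z))))).
Proof.
move=> _ [W_ge0 W_sum1] Otheta Oxs.
rewrite equilibrium_iff_levels_cohesive //.
split=> [|[cons | //]]; first by right.
by apply: consensus_levels_cohesive.
Qed.
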